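(* In any execution of the algorithm described in the context, for every round $r>0$, every non-faulty process $p_i$ eventually receives enough valid messages to satisfy the $\mathsf{is\_valid}$ predicate for round $r$; that is, eventually there exist $v\in\{0,1\}$ and $S\subseteq\mathit{aux\_values}_i$ with $\mathsf{is\_valid}(r,v,S)$ true.
   Context: Model. There are $n$ processes $p_1,\dots,p_n$ ($i$ is the index of $p_i$) communicating over an asynchronous, reliable, point-to-point network: every pair of processes is connected by a channel, message delays are finite but unbounded, and the network does not lose, duplicate, modify or create messages. ''Broadcast'' means sending the message to every process (including oneself). Messages are signed with unforgeable digital signatures ($\langle m\rangle_j$ denotes message $m$ signed by $p_j$); malformed messages or messages with invalid signatures are ignored. Up to $t$ processes are Byzantine (faulty) and may behave arbitrarily and collude, but cannot forge signatures of other processes; the remaining processes are non-faulty and follow the algorithm. It is assumed that $t<n/3$. Algorithm. Messages are of the form $\mathrm{AUX}[r](v)$ with round $r\in\mathbb{N}$ and $v\in\{0,1\}$, sent as a pair $(\langle \mathrm{AUX}[r](v)\rangle_j,\mathit{proofs})$ where $\mathit{proofs}$ is a set of signed AUX messages. The predicate $\mathsf{is\_valid}(r,est,\mathit{proofs})$ is: if $r=0$ return true; if $r=1$ return true iff $\mathit{proofs}$ contains signed $\mathrm{AUX}[0](est)$ messages from $t+1$ different processes; otherwise let $b=(r-1)\bmod 2$; if $est=b$, return true iff ($r=2$ and $\mathit{proofs}$ contains signed $\mathrm{AUX}[0](b)$ from $t+1$ different processes) or ($\mathit{proofs}$ contains signed $\mathrm{AUX}[r-2](b)$ from $n-t$ different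 processes); if $est\neq b$, return true iff $\mathit{proofs}$ contains signed $\mathrm{AUX}[r-1](\neg b)$ from $n-t$ different processes. Each process $p_i$ with proposal $v_i$ keeps a round counter $r_i$, a set $\mathit{aux\_values}_i$ of signed AUX messages, and timers indexed by naturals (timers $2r$ and $2r+1$ belong to round $r$; starting an already started or expired timer does nothing). It sets $r_i:=0$, $\mathit{aux\_values}_i:=\emptyset$, broadcasts $(\langle\mathrm{AUX}[0](v_i)\rangle_i,\emptyset)$, then repeats forever: (1) $r_i:=r_i+1$; (2) if $i=r_i\bmod n$ (coordinator), run Broadcast; (3) start timer $2r_i$ and wait until it expires; (4) if $i\ne r_i\bmod n$, run Broadcast; (5) wait until $\mathit{aux\_values}_i$ contains round-$r_i$ AUX messages from $n-t$ different processes; (6) start timer $2r_i+1$ and wait until it expires; (7) with $b_i=r_i\bmod 2$, if $\mathit{aux\_values}_i$ contains $\mathrm{AUX}[r_i](b_i)$ from $n-t$ different processes, decide $b_i$ (if not yet decided). Broadcast: let $\mathit{values}_i$ be the set of $v\in\{0,1\}$ such that $\mathsf{is\_valid}(r_i,v,S)$ holds for some $S\subseteq\mathit{aux\_values}_i$; let $bv=(r_i+1)\bmod 2$; if $p_i$ received from $p_{r_i\bmod n}$ a message $(\langle\mathrm{AUX}[r_i](p)\rangle_{r_i\bmod n},\cdot)$ with $p\in\mathit{values}_i$ then $est_i:=p$, else if $bv\in\mathit{values}_i$ then $est_i:=bv$, else $est_i:=\neg bv$; choose $\mathit{proofs}\subseteq\mathit{aux\_values}_i$ with $\mathsf{is\_valid}(r_i,est_i,\mathit{proofs})$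 and broadcast $(\langle\mathrm{AUX}[r_i](est_i)\rangle_i,\mathit{proofs})$. On receiving $(\langle\mathrm{AUX}[r_j](est_j)\rangle_j,\mathit{proofs})$: if $\mathsf{is\_valid}(r_j,est_j,\mathit{proofs})$, add the signed message and the messages of $\mathit{proofs}$ needed to satisfy the predicate to $\mathit{aux\_values}_i$ (such messages are called valid). Then let $\rho_i$ be the largest round for which $\mathit{aux\_values}_i$ contains messages from $t+1$ different processes, and set every timer with index $\le 2\rho_i$ to expired. *)

From mathcomp Require Import all_boot.
Set Implicit Arguments. Unset Strict Implicit. Unset Printing Implicit Defensive.

(* program counter of a non-faulty process:
   PInit  : has not yet broadcast AUX[0](v_i)
   PStart : about to execute steps (1)-(3) of the next round
   PWait1 : waiting for timer 2r (step 3), then step (4)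
   PWait2 : waiting for n-t round-r messages (step 5), then step (6)
   PWait3 : waiting for timer 2r+1 (step 6), then step (7) *)
Inductive pcT := PInit | PStart | PWait1 | PWait2 | PWait3.

Section Model.
Variables (n t : nat).

(* a signed message <AUX[r](v)>_j is the triple (j, r, v); signatures are
   unforgeable, modelled globally in [step] below. *)
Definition smsg := ('I_n * nat * bool)%type.
Definition signer (m : smsg) : 'I_n := m.1.1.
Definition mround (m : smsg) : nat := m.1.2.
Definition mval (m : smsg) : bool := m.2.

(* what travels: (<AUX[r](v)>_j, proofs) *)
Definition payload := (smsg * seq smsg)%type.
Definition packet := ('I_n * 'I_n * payload)%type.
Definition psrc (p : packet) : 'I_n := p.1.1.
Definition pdst (p : packet) : 'I_n := p.1.2.
Definition ppl (p : packet) : payload := p.2.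

Definition nsigners (S : seq smsg) (P : smsg -> bool) : nat :=
  #|[set j : 'I_n | has (fun m => (signer m == j) && P m) S]|.

Definition has_from (S : seq smsg) (k : nat) (b : bool) (m : nat) : bool :=
  m <= nsigners S (fun x => (mround x == k) && (mval x == b)).

(* values 0/1 are encoded as false/true; x mod 2 is [odd x] *)
Definition is_valid (r : nat) (est : bool) (S : seq smsg) : bool :=
  if r == 0 then true
  else if r == 1 then has_from S 0 est t.+1
  else let b := odd r.-1 in
    if est == b then ((r == 2) && has_from S 0 b t.+1) || has_from S (r - 2) b (n - t)
    else has_from S r.-1 (~~ b) (n - t).

Definition relevant (r : nat) (est : bool) (x : smsg) : bool :=
  if r == 0 then false
  else if r == 1 then (mround x == 0) && (mval x == est)
  else let b := odd r.-1 in
    if est == b then ((r == 2) && (mround x == 0) && (mval x == b))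
                     || ((mround x == r - 2) && (mval x == b))
    else (mround x == r.-1) && (mval x == ~~ b).

Definition needed (r : nat) (est : bool) (S : seq smsg) : seq smsg :=
  filter (relevant r est) S.

Record lstate := LState {
  pc : pcT;
  rnd : nat;
  aux : seq smsg;
  started : nat -> bool;
  expired : nat -> bool;
  recvd : seq ('I_n * payload);
  decided : option bool }.

Definition init_lstate : lstate :=
  LState PInit 0 [::] (fun _ => false) (fun _ => false) [::] None.

(* processes are identified with 0,...,n-1; p_i coordinates round r iff i = r mod n *)
Definition is_coord (i : 'I_n) (r : nat) : bool := val i == r %% n.

Definition in_values (s : lstate) (r : nat) (v : bool) : Prop :=
  exists S : seq smsg, {subset S <= aux s} /\ is_valid r v S.

Definition coord_sent (s : lstate) (r : nat) (p : bool) : Prop :=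
  exists (c : 'I_n) (pr : seq smsg), is_coord c r /\ (c, ((c, r, p), pr)) \in recvd s.

Definition bcast (i : 'I_n) (s : lstate) (r : nat) (pl : payload) : Prop :=
  let bv := odd r.+1 in
  exists est : bool,
    ((coord_sent s r est /\ in_values s r est)
     \/ ((forall p, coord_sent s r p -> ~ in_values s r p) /\
         ((in_values s r bv /\ est = bv) \/ (~ in_values s r bv /\ est = ~~ bv)))) /\
    pl.1 = (i, r, est) /\ {subset pl.2 <= aux s} /\ is_valid r est pl.2.

Definition set_started (s : lstate) (k : nat) (p : pcT) : lstate :=
  LState p (rnd s) (aux s) (fun j => started s j || (j == k)) (expired s)
         (recvd s) (decided s).

(* one atomic local step of non-faulty p_i with proposal vi;
   out = Some pl iff the step broadcasts pl *)
Definition lstep (i : 'I_n) (vi : bool) (s s' : lstate) (out : option payload) : Prop :=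
  match pc s with
  | PInit =>
      s' = LState PStart 0 (aux s) (started s) (expired s) (recvd s) (decided s)
      /\ out = Some ((i, 0, vi), [::])
  | PStart =>
      let r := (rnd s).+1 in
      s' = LState PWait1 r (aux s) (fun j => started s j || (j == 2 * r))
                  (expired s) (recvd s) (decided s)
      /\ (if is_coord i r then exists pl, bcast i s r pl /\ out = Some pl
          else out = None)
  | PWait1 =>
      expired s (2 * rnd s)
      /\ s' = LState PWait2 (rnd s) (aux s) (started s) (expired s) (recvd s) (decided s)
      /\ (if is_coord i (rnd s) then out = None
          else exists pl, bcast i s (rnd s) pl /\ out = Some pl)
  | PWait2 =>
      n - t <= nsigners (aux s) (fun x => mround x == rnd s)
      /\ s' = set_started s (2 * rnd s).+1 PWait3
      /\ out = None
  | PWait3 =>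
      expired s (2 * rnd s).+1
      /\ s' = LState PStart (rnd s) (aux s) (started s) (expired s) (recvd s)
               (if (decided s == None) && has_from (aux s) (rnd s) (odd (rnd s)) (n - t)
                then Some (odd (rnd s)) else decided s)
      /\ out = None
  end.

Definition lenabled (i : 'I_n) (vi : bool) (s : lstate) : Prop :=
  exists s' out, lstep i vi s s' out.

Definition receive (s : lstate) (src : 'I_n) (pl : payload) : lstate :=
  let m := pl.1 in
  let pr := pl.2 in
  let aux' := if is_valid (mround m) (mval m) pr
              then aux s ++ m :: needed (mround m) (mval m) pr else aux s in
  LState (pc s) (rnd s) aux' (started s)
    (fun k => expired s k ||
       has (fun x => (k <= 2 * mround x) &&
                     (t.+1 <= nsigners aux' (fun y => mround y == mround x))) aux')
    (rcons (recvd s) (src, pl)) (decided s).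

Definition expire (s : lstate) (k : nat) : lstate :=
  LState (pc s) (rnd s) (aux s) (started s) (fun j => expired s j || (j == k))
         (recvd s) (decided s).

Record config := Config {
  loc : 'I_n -> lstate;     (* local states (meaningful for non-faulty processes) *)
  net : seq packet;
  sigs : seq smsg }.        (* all signatures ever produced by non-faulty processes *)

Definition init_config : config := Config (fun _ => init_lstate) [::] [::].

Inductive label :=
  | LDeliver of packet
  | LLocal of 'I_n
  | LTimer of 'I_n & nat
  | LByz of seq packet
  | LIdle.

Definition upd (f : 'I_n -> lstate) (i : 'I_n) (x : lstate) : 'I_n -> lstate :=
  fun j => if j == i then x else f j.

Definition bcast_packets (i : 'I_n) (pl : payload) : seq packet :=
  [seq (i, j, pl) | j <- enum 'I_n].

Definition step (faulty : {set 'I_n}) (prop : 'I_n -> bool)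
    (C : config) (l : label) (C' : config) : Prop :=
  match l with
  | LDeliver p =>
      p \in net C /\ net C' = rem p (net C) /\ sigs C' = sigs C /\
      loc C' = (if pdst p \in faulty then loc C
                else upd (loc C) (pdst p) (receive (loc C (pdst p)) (psrc p) (ppl p)))
  | LLocal i =>
      i \notin faulty /\
      exists s' out, lstep i (prop i) (loc C i) s' out /\ loc C' = upd (loc C) i s' /\
        match out with
        | None => net C' = net C /\ sigs C' = sigs C
        | Some pl => net C' = net C ++ bcast_packets i pl /\ sigs C' = rcons (sigs C) pl.1
        end
  | LTimer i k =>
      i \notin faulty /\ started (loc C i) k /\ ~~ expired (loc C i) k /\
      loc C' = upd (loc C) i (expire (loc C i) k) /\ net C' = net C /\ sigs C' = sigs C
  | LByz ps =>
      (* Byzantine processes send arbitrary packets on their own channels,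
         but cannot forge signatures of non-faulty processes *)
      (forall p, p \in ps -> psrc p \in faulty) /\
      (forall p x, p \in ps -> x \in (ppl p).1 :: (ppl p).2 ->
                   signer x \notin faulty -> x \in sigs C) /\
      net C' = net C ++ ps /\ loc C' = loc C /\ sigs C' = sigs C
  | LIdle => C' = C
  end.

Definition execution (faulty : {set 'I_n}) (prop : 'I_n -> bool)
    (C : nat -> config) (lab : nat -> label) : Prop :=
  C 0 = init_config /\
  (forall k, step faulty prop (C k) (lab k) (C k.+1)) /\
  (forall k p, p \in net (C k) -> pdst p \notin faulty ->
     exists k', k <= k' /\ lab k' = LDeliver p) /\
  (forall k (i : 'I_n) j, i \notin faulty -> started (loc (C k) i) j ->
     exists k', k <= k' /\ expired (loc (C k') i) j) /\
  (* weak fairness: non-faulty processes keep taking enabled local steps *)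
  (forall k (i : 'I_n), i \notin faulty ->
     (forall k', k <= k' -> lenabled i (prop i) (loc (C k') i)) ->
     exists k', k <= k' /\ lab k' = LLocal i).

End Model.

(* By induction on r, every correct process completes round r and broadcasts a
   valid AUX[r] message.  A correct process only waits for timers, which expire,
   for a value of values_i, and for n - t round-r messages; the last two are
   supplied by the valid broadcasts of all correct processes in the previous and
   in the current round, delivered together with their proofs.  Once all correct
   processes have sent valid AUX[r] messages, round r + 1 is justified: for r = 0
   some value occurs t + 1 times among the more than 2t correct votes; otherwise,
   with b = r mod 2, either a correct process voted b, and the proofs it attached
   justify b again in round r + 1, or all correct processes voted ~b. *)

From mathcomp Require Import all_boot zify.
From Stdlib Require Import Classical.

Set Implicit Arguments.
Unset Strict Implicit.

Lemma eventually_forall (T : finType) (P : T -> nat -> Prop) :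
  (forall x k k', k <= k' -> P x k -> P x k') ->
  (forall x, exists k, P x k) -> exists K, forall x, P x K.
Proof.
move=> P_mono P_ev.
suff [K HK] : exists K, forall x, x \in enum T -> P x K.
  by exists K => x; apply: HK; rewrite mem_enum.
elim: (enum T) => [|x s [K HK]]; first by exists 0.
have [kx Px] := P_ev x; exists (maxn kx K) => y; rewrite inE => /predU1P [-> | ys].
  exact: P_mono (leq_maxl _ _) Px.
exact: P_mono (leq_maxr _ _) (HK _ ys).
Qed.

Section LocalState.
Variables (n t : nat).
Implicit Types (s : lstate n).

Definition progress s : nat :=
  match pc s with
  | PInit => 3
  | PStart => 4 * (rnd s).+1
  | PWait1 => (4 * rnd s).+1
  | PWait2 => (4 * rnd s).+2
  | PWait3 => (4 * rnd s).+3
  end.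

Definition waiting (p : pcT) : bool :=
  match p with PInit | PStart => false | _ => true end.

Record wf_lstate s : Prop := WfLState {
  wf_wait1 : pc s = PWait1 -> started s (2 * rnd s);
  wf_wait3 : pc s = PWait3 -> started s (2 * rnd s).+1;
  (* keeps [PWait3] of round 0 from sharing progress 3 with [PInit] *)
  wf_rnd : waiting (pc s) -> 0 < rnd s }.

Record grows s s' : Prop := Grows {
  grows_aux : {subset aux s <= aux s'};
  grows_expired : forall k, expired s k -> expired s' k }.

Lemma grows_refl s : grows s s.
Proof. by split. Qed.

Lemma grows_trans s2 s1 s3 : grows s1 s2 -> grows s2 s3 -> grows s1 s3.
Proof.
by case=> A1 E1 [A2 E2]; split=> [x /A1 /A2|k /E1 /E2].
Qed.

Lemma lstep_progress i vi s s' out :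
  lstep t i vi s s' out -> progress s' = (progress s).+1.
Proof.
rewrite /lstep /progress.
by case: (pc s) => [[-> _]|[-> _]|[_ [-> _]]|[_ [-> _]]|[_ [-> _]]] //=; lia.
Qed.

Lemma lstep_grows i vi s s' out : lstep t i vi s s' out -> grows s s'.
Proof.
rewrite /lstep.
by case: (pc s) => [[-> _]|[-> _]|[_ [-> _]]|[_ [-> _]]|[_ [-> _]]];
  split=> //= x hx; rewrite hx.
Qed.

Lemma lstep_wf i vi s s' out : lstep t i vi s s' out -> wf_lstate s -> wf_lstate s'.
Proof.
move=> hs [w1 w3 wr]; move: hs w1 w3 wr; rewrite /lstep.
case: (pc s) => [[-> _]|[-> _]|[_ [-> _]]|[_ [-> _]]|[_ [-> _]]] w1 w3 wr;
  split=> //= *; by rewrite ?eqxx ?orbT ?wr.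
Qed.

Definition passive_update s s' : Prop :=
  [\/ s' = s, exists src pl, s' = receive t s src pl | exists k, s' = expire s k].

Lemma passive_grows s s' : passive_update s s' -> grows s s'.
Proof.
case=> [->|[src [pl ->]]|[k ->]]; split=> //= x hx; rewrite ?hx //.
by case: ifP => _ //; rewrite mem_cat hx.
Qed.

Lemma passive_progress s s' : passive_update s s' -> progress s' = progress s.
Proof. by case=> [->|[src [pl ->]]|[k ->]]. Qed.

Lemma passive_wf s s' : passive_update s s' -> wf_lstate s -> wf_lstate s'.
Proof. by case=> [->|[src [pl ->]]|[k ->]] [*]; split. Qed.

Lemma progress_init s : wf_lstate s -> progress s = 3 -> pc s = PInit.
Proof.
case=> _ _ wr; rewrite /progress.
by case: (pc s) wr => //= [_|wr|wr|wr] h; [lia | have := wr isT; lia ..].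
Qed.

Ltac decode_progress :=
  rewrite /progress; case: (pc _) => /= h; first [by split=> //; lia | exfalso; lia].

Lemma progress_start s r : progress s = 4 * r.+1 -> pc s = PStart /\ rnd s = r.
Proof. decode_progress. Qed.

Lemma progress_wait1 s r : progress s = (4 * r.+1).+1 -> pc s = PWait1 /\ rnd s = r.+1.
Proof. decode_progress. Qed.

Lemma progress_wait2 s r : progress s = (4 * r.+1).+2 -> pc s = PWait2 /\ rnd s = r.+1.
Proof. decode_progress. Qed.

Lemma progress_wait3 s r : progress s = (4 * r.+1).+3 -> pc s = PWait3 /\ rnd s = r.+1.
Proof. decode_progress. Qed.

Lemma bcast_exists j s r : (exists v, in_values t s r v) -> exists pl, bcast t j s r pl.
Proof.
move=> [v v_in]; rewrite /bcast /=; move: (~~ odd r) => bv.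
suff [est [rule [pr [sub V]]]] : exists est,
    (coord_sent s r est /\ in_values t s r est
     \/ (forall p, coord_sent s r p -> ~ in_values t s r p) /\
        (in_values t s r bv /\ est = bv \/ ~ in_values t s r bv /\ est = ~~ bv))
    /\ in_values t s r est.
  by exists ((j, r, est), pr), est; do !split.
case: (classic (exists p, coord_sent s r p /\ in_values t s r p)) => [[p [cp pv]]|no_coord].
  by exists p; split; [left|].
have no_coord' p : coord_sent s r p -> ~ in_values t s r p.
  by move=> cp pv; apply: no_coord; exists p.
case: (classic (in_values t s r bv)) => bv_in.
  by exists bv; split=> //; right; split=> //; left.
exists (~~ bv); split; first by right; split=> //; right.
by case: v bv v_in bv_in => [] [] // v_in /(_ v_in) [].
Qed.

Lemma mem_bcast_packets (j i : 'I_n) pl : (j, i, pl) \in bcast_packets j pl.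
Proof. by apply/mapP; exists i; rewrite ?mem_enum. Qed.

End LocalState.

Section Justification.
Variables (n t : nat).

Definition valid_from (S : seq (smsg n)) (j : 'I_n) (r : nat) : Prop :=
  exists est pr, (j, r, est) \in S /\ is_valid t r est pr /\ {subset needed r est pr <= S}.

Lemma valid_from_subset S S' j r :
  {subset S <= S'} -> valid_from S j r -> valid_from S' j r.
Proof.
by move=> sub [est [pr [jS [V nS]]]]; exists est, pr; split; [|split=> // x /nS]; apply: sub.
Qed.

Lemma nsigners_filter (S : seq (smsg n)) (P q : pred (smsg n)) :
  (forall x, P x -> q x) -> nsigners (filter q S) P = nsigners S P.
Proof.
move=> Pq; apply: eq_card => j; rewrite !inE; apply/hasP/hasP => -[x].
  by rewrite mem_filter => /andP [_ xS] Px; exists x.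
by move=> xS /[dup] /andP [_ /Pq qx] Px; exists x; rewrite // mem_filter qx.
Qed.

Lemma is_valid_needed_succ r (pr : seq (smsg n)) :
  is_valid t r.+1 (odd r.+1) pr ->
  is_valid t r.+2 (odd r.+1) (needed r.+1 (odd r.+1) pr).
Proof.
case: r => [|r]; rewrite /is_valid /needed /relevant /has_from /=.
  by move=> V; rewrite nsigners_filter ?V // => x ->; rewrite orbT.
have -> : r.+3 - 2 = r.+1 by lia.
by case: (odd r) => /= V; rewrite nsigners_filter.
Qed.

End Justification.

Section Quorums.
Variables (n t : nat) (faulty : {set 'I_n}).
Hypotheses (few_faulty : #|faulty| <= t) (t_lt_third : 3 * t < n).

Lemma card_correct : n - t <= #|~: faulty|.
Proof. by rewrite cardsCs setCK card_ord leq_sub2l. Qed.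

Lemma nsigners_correct (S : seq (smsg n)) (P : pred (smsg n)) :
  (forall j, j \notin faulty -> has (fun m => (signer m == j) && P m) S) ->
  n - t <= nsigners S P.
Proof.
move=> HS; apply: leq_trans card_correct _; apply: subset_leq_card.
by apply/subsetP => j; rewrite !inE; apply: HS.
Qed.

(* Pigeonhole: the more than 2t correct AUX[0] votes contain a value t + 1 times. *)
Lemma justified_round1 (S : seq (smsg n)) :
  (forall j, j \notin faulty -> valid_from t S j 0) ->
  exists v T, {subset T <= S} /\ is_valid t 1 v T.
Proof.
move=> HS.
pose voters b :=
  [set j | has (fun x => (signer x == j) && ((mround x == 0) && (mval x == b))) S].
have split_votes : #|~: faulty| <= #|voters false| + #|voters true|.
  apply: leq_trans (_ : #|voters false :|: voters true| <= _); last first.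
    by rewrite cardsU leq_subr.
  apply: subset_leq_card; apply/subsetP => j; rewrite inE => jF.
  have [est [_ [jS _]]] := HS j jF.
  have : j \in voters est by rewrite inE; apply/hasP; exists (j, 0, est); rewrite //= !eqxx.
  by case: est {jS}; rewrite in_setU => ->; rewrite ?orbT.
have [v many] : exists v, t < #|voters v|.
  case: (ltnP t #|voters false|) => [|few_false]; first by exists false.
  case: (ltnP t #|voters true|) => [|few_true]; first by exists true.
  by have := card_correct; lia.
by exists v, S; split.
Qed.

Lemma justified_round_succ r (S : seq (smsg n)) :
  (forall j, j \notin faulty -> valid_from t S j r.+1) ->
  exists v T, {subset T <= S} /\ is_valid t r.+2 v T.
Proof.
move=> HS.
case: (classic (exists j pr, j \notin faulty /\ is_valid t r.+1 (odd r.+1) pr /\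
                  {subset needed r.+1 (odd r.+1) pr <= S})).
  case=> j [pr [_ [V sub]]]; exists (odd r.+1), (needed r.+1 (odd r.+1) pr).
  by split=> //; apply: is_valid_needed_succ.
move=> no_parity; exists (~~ odd r.+1), S; split=> //.
suff : n - t <= nsigners S (fun x => (mround x == r.+1) && (mval x == ~~ odd r.+1)).
  by rewrite /is_valid /has_from /=; case: (odd r).
apply: nsigners_correct => j jF; have [est [pr [jS [V sub]]]] := HS j jF.
have est_flip : est = ~~ odd r.+1.
  case: (boolP (est == odd r.+1)) => [/eqP est_eq | ].
    by case: no_parity; exists j, pr; rewrite -est_eq.
  by case: est {jS V sub}; case: (odd r.+1).
by apply/hasP; exists (j, r.+1, est); rewrite //= est_flip !eqxx.
Qed.

Lemma justified_next_round r (S : seq (smsg n)) :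
  (forall j, j \notin faulty -> valid_from t S j r) ->
  exists v T, {subset T <= S} /\ is_valid t r.+1 v T.
Proof. by case: r => [|r]; [apply: justified_round1 | apply: justified_round_succ]. Qed.

End Quorums.

Section Execution.
Variables (n t : nat) (faulty : {set 'I_n}) (prop : 'I_n -> bool)
  (C : nat -> config n) (lab : nat -> label n).
Hypotheses (few_faulty : #|faulty| <= t) (t_lt_third : 3 * t < n).
Hypothesis C0 : C 0 = init_config n.
Hypothesis Cstep : forall k, step t faulty prop (C k) (lab k) (C k.+1).

Local Notation state k j := (loc (C k) j).

Lemma step_cases k j :
  passive_update t (state k j) (state k.+1 j) \/
  exists out, lstep t j (prop j) (state k j) (state k.+1 j) out /\
    forall pl, out = Some pl -> net (C k.+1) = net (C k) ++ bcast_packets j pl.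
Proof.
have := Cstep k; case: (lab k) => [p|i|i x|ps|] /=.
- case=> _ [_ [_ ->]]; case: ifP => _; first by left; apply: Or31.
  rewrite /upd; case: eqP => [->|_]; last by left; apply: Or31.
  by left; apply: Or32; eauto.
- case=> _ [s' [out [ls [-> net_out]]]]; rewrite /upd; case: eqP => [->|_].
    by right; exists out; split=> // pl out_pl; move: net_out; rewrite out_pl => -[].
  by left; apply: Or31.
- case=> _ [_ [_ [-> _]]]; rewrite /upd; case: eqP => [->|_]; last by left; apply: Or31.
  by left; apply: Or33; eauto.
- by case=> _ [_ [_ [-> _]]]; left; apply: Or31.
- by move=> ->; left; apply: Or31.
Qed.

Lemma state_grows j k k' : k <= k' -> grows (state k j) (state k' j).
Proof.
move=> le; apply: (homo_leq (f := fun k => state k j) (@grows_refl _) (@grows_trans _) _ le).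
move=> m.
by case: (step_cases m j) => [/passive_grows | [out [/lstep_grows]]].
Qed.

Lemma state_progress_mono j k k' : k <= k' -> progress (state k j) <= progress (state k' j).
Proof.
move=> le; apply: (homo_leq (r := fun a b => a <= b) (f := fun k => progress (state k j))
  leqnn leq_trans _ le) => m.
by case: (step_cases m j) => [/passive_progress -> | [out [/lstep_progress -> _]]].
Qed.

Lemma state_wf j k : wf_lstate (state k j).
Proof.
elim: k => [|k IH]; first by rewrite C0.
by case: (step_cases k j) => [/passive_wf wf_k | [out [/lstep_wf wf_k _]]]; apply: wf_k.
Qed.

Definition sent_valid (j : 'I_n) (r : nat) : Prop :=
  exists k est pr, is_valid t r est pr /\ forall i, (j, i, ((j, r, est), pr)) \in net (C k).

Lemma sent_valid_broadcast j k r est pr :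
  net (C k.+1) = net (C k) ++ bcast_packets j ((j, r, est), pr) ->
  is_valid t r est pr -> sent_valid j r.
Proof.
move=> net_k V; exists k.+1, est, pr; split=> // i.
by rewrite net_k mem_cat mem_bcast_packets orbT.
Qed.

Lemma sent_valid_of_bcast j k s r pl : bcast t j s r pl ->
  net (C k.+1) = net (C k) ++ bcast_packets j pl -> sent_valid j r.
Proof.
case: pl => m pr [est [_ [/= -> [_ V]]]] net_k.
exact: sent_valid_broadcast net_k V.
Qed.

Section Liveness.
Hypothesis deliver : forall k p, p \in net (C k) -> pdst p \notin faulty ->
  exists k', k <= k' /\ lab k' = LDeliver p.
Hypothesis timer : forall k (i : 'I_n) x, i \notin faulty -> started (state k i) x ->
  exists k', k <= k' /\ expired (state k' i) x.
Hypothesis fair : forall k (i : 'I_n), i \notin faulty ->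
  (forall k', k <= k' -> lenabled t i (prop i) (state k' i)) ->
  exists k', k <= k' /\ lab k' = LLocal i.

Definition reaches (j : 'I_n) (p : nat) : Prop := exists k, p <= progress (state k j).

Definition enabled_at (j : 'I_n) (p : nat) : Prop :=
  forall k, progress (state k j) = p -> exists K, forall k', K <= k' ->
    progress (state k' j) = p -> lenabled t j (prop j) (state k' j).

(* Were progress stuck at p, the process would stay enabled, so weak fairness
   would schedule a local step, which increments progress. *)
Lemma reaches_succ j p : j \notin faulty -> reaches j p -> enabled_at j p -> reaches j p.+1.
Proof.
move=> jF [k0 reach0] en.
case: (ltnP p (progress (state k0 j))) => [|le0]; first by exists k0.
have at0 : progress (state k0 j) = p by apply/eqP; rewrite eqn_leq le0.
have [K en_K] := en _ at0.
apply: NNPP => stuck.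
have below k : progress (state k j) <= p.
  by rewrite leqNgt; apply/negP => above; apply: stuck; exists k.
have stays k : maxn k0 K <= k -> progress (state k j) = p.
  move=> le; apply/eqP; rewrite eqn_leq below -{1}at0 state_progress_mono //.
  exact: leq_trans (leq_maxl _ _) le.
have [k [le lab_k]] :=
  fair jF (fun k le => en_K k (leq_trans (leq_maxr _ _) le) (stays k le)).
have := Cstep k; rewrite lab_k => -[_ [s' [out [ls [loc_k _]]]]].
have := stays k.+1 (leqW le); rewrite loc_k /upd eqxx (lstep_progress ls) (stays k le).
by move/esym/n_Sn.
Qed.

(* Passive updates keep progress and local steps add one, so progress crosses
   q + 1 by a local step taken at q. *)
Lemma lstep_into j q : 3 <= q -> reaches j q.+1 ->
  exists k out, progress (state k j) = q /\
    lstep t j (prop j) (state k j) (state k.+1 j) out /\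
    forall pl, out = Some pl -> net (C k.+1) = net (C k) ++ bcast_packets j pl.
Proof.
move=> q_ge3 [k reach].
have [m /andP [before after]] : exists m, progress (state m j) <= q < progress (state m.+1 j).
  elim: k reach => [|k IH] reach; first by move: reach; rewrite C0 /progress /=; lia.
  by case: (leqP (progress (state k j)) q) => [before|]; [exists k; rewrite before | apply: IH].
case: (step_cases m j) => [/passive_progress still | [out [ls net_m]]].
  by move: after; rewrite still; lia.
by exists m, out; split=> //; move: after; rewrite (lstep_progress ls); lia.
Qed.

Lemma eventually_expired j k x : j \notin faulty -> started (state k j) x ->
  exists K, forall k', K <= k' -> expired (state k' j) x.
Proof.
move=> jF st; have [K [_ exp]] := timer jF st.
by exists K => k' le; apply: grows_expired (state_grows j le) _ exp.
Qed.

Lemma delivered k j i r est pr : (j, i, ((j, r, est), pr)) \in net (C k) ->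
  i \notin faulty -> is_valid t r est pr -> exists k', valid_from t (aux (state k' i)) j r.
Proof.
move=> in_net iF V; have [k' [_ lab_k']] := deliver in_net iF.
have := Cstep k'; rewrite lab_k' /= /pdst /= (negbTE iF) => -[_ [_ [_ loc_k']]].
exists k'.+1, est, pr; rewrite loc_k' /upd eqxx /receive /= V /mround /=.
by split; [|split=> // x x_needed]; rewrite mem_cat inE ?x_needed ?eqxx ?orbT.
Qed.

Lemma sent_valid_received r i : (forall j, j \notin faulty -> sent_valid j r) ->
  i \notin faulty ->
  exists K, forall j, j \notin faulty -> valid_from t (aux (state K i)) j r.
Proof.
move=> sent iF.
apply: (eventually_forall
  (P := fun j K => j \notin faulty -> valid_from t (aux (state K i)) j r)).
  move=> j k k' le valid_k jF.
  exact: valid_from_subset (grows_aux (state_grows i le)) (valid_k jF).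
move=> j; case: (boolP (j \in faulty)) => [jF|jF]; first by exists 0.
have [k [est [pr [V in_net]]]] := sent j jF.
by have [k' valid_k'] := delivered (in_net i) iF V; exists k'.
Qed.

Lemma eventually_in_values r i : (forall j, j \notin faulty -> sent_valid j r) ->
  i \notin faulty -> exists k v, in_values t (state k i) r.+1 v.
Proof.
move=> sent iF; have [K valid_K] := sent_valid_received sent iF.
by exists K; apply: (justified_next_round few_faulty t_lt_third valid_K).
Qed.

Definition round_done (r : nat) : Prop :=
  forall j, j \notin faulty -> reaches j (4 * r.+1) /\ sent_valid j r.

Lemma round_done0 : round_done 0.
Proof.
move=> j jF.
have reach4 : reaches j 4.
  apply: (reaches_succ jF); first by exists 0; rewrite C0.
  move=> k _; exists 0 => k' _ /(progress_init (state_wf j k')) pc_init.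
  by rewrite /lenabled /lstep pc_init; eauto.
split=> //; have [k [out [at3 [ls net_k]]]] := lstep_into (leqnn 3) reach4.
move: ls; rewrite /lstep (progress_init (state_wf j k) at3) => -[_ out_k].
exact: sent_valid_broadcast (net_k _ out_k) isT.
Qed.

Section NextRound.
Variable r : nat.
Hypothesis done_r : round_done r.

Lemma eventually_bcast j : j \notin faulty ->
  exists K, forall k, K <= k -> exists pl, bcast t j (state k j) r.+1 pl.
Proof.
move=> jF.
have [K [v [S [sub V]]]] := eventually_in_values (fun j jF => (done_r jF).2) jF.
exists K => k le; apply: bcast_exists; exists v, S; split=> // x /sub.
exact: grows_aux (state_grows j le) x.
Qed.

Lemma reaches_wait1 j : j \notin faulty -> reaches j (4 * r.+1).+1.
Proof.
move=> jF; apply: (reaches_succ jF (done_r jF).1) => _ _.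
have [K bc] := eventually_bcast jF.
exists K => k le /progress_start [pc_k rnd_k]; rewrite /lenabled /lstep pc_k rnd_k.
case: (is_coord j r.+1); last by do 2 eexists; split.
by have [pl bc_k] := bc k le; do 2 eexists; split=> //; exists pl.
Qed.

Lemma reaches_wait2 j : j \notin faulty -> reaches j (4 * r.+1).+2.
Proof.
move=> jF; apply: (reaches_succ jF (reaches_wait1 jF)) => k0 /progress_wait1 [pc0 rnd0].
have [K1 exp] := eventually_expired jF (wf_wait1 (state_wf j k0) pc0).
have [K2 bc] := eventually_bcast jF.
exists (maxn K1 K2) => k.
rewrite geq_max => /andP [le1 le2] /progress_wait1 [pc_k rnd_k].
rewrite /lenabled /lstep pc_k rnd_k; rewrite rnd0 in exp.
case: (is_coord j r.+1); first by do 2 eexists; split; [exact: exp|split].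
by have [pl bc_k] := bc k le2; do 2 eexists; split; [exact: exp|split=> //; exists pl].
Qed.

Lemma sent_valid_next j : j \notin faulty -> sent_valid j r.+1.
Proof.
move=> jF; have ge3 : 3 <= 4 * r.+1 by lia.
case coord: (is_coord j r.+1).
  have [k [out [at_k [ls net_k]]]] := lstep_into ge3 (reaches_wait1 jF).
  move: ls; have [pc_k rnd_k] := progress_start at_k.
  rewrite /lstep pc_k rnd_k coord => -[_ [pl [bc out_k]]].
  exact: sent_valid_of_bcast bc (net_k _ out_k).
have [k [out [at_k [ls net_k]]]] := lstep_into (leqW ge3) (reaches_wait2 jF).
move: ls; have [pc_k rnd_k] := progress_wait1 at_k.
rewrite /lstep pc_k rnd_k coord => -[_ [_ [pl [bc out_k]]]].
exact: sent_valid_of_bcast bc (net_k _ out_k).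
Qed.

Lemma reaches_wait3 j : j \notin faulty -> reaches j (4 * r.+1).+3.
Proof.
move=> jF; apply: (reaches_succ jF (reaches_wait2 jF)) => _ _.
have [K valid_K] := sent_valid_received sent_valid_next jF.
exists K => k le /progress_wait2 [pc_k rnd_k]; rewrite /lenabled /lstep pc_k rnd_k.
do 2 eexists; split; last by split.
apply: (nsigners_correct few_faulty) => i iF; have [est [_ [i_sent _]]] := valid_K i iF.
apply/hasP; exists (i, r.+1, est); last by rewrite /= !eqxx.
exact: grows_aux (state_grows j le) _ i_sent.
Qed.

Lemma reaches_next_round j : j \notin faulty -> reaches j (4 * r.+2).
Proof.
move=> jF; have -> : 4 * r.+2 = (4 * r.+1).+4 by rewrite mulnSr addn4.
apply: (reaches_succ jF (reaches_wait3 jF)) => k0 /progress_wait3 [pc0 rnd0].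
have [K exp] := eventually_expired jF (wf_wait3 (state_wf j k0) pc0).
exists K => k le /progress_wait3 [pc_k rnd_k]; rewrite rnd0 in exp.
by rewrite /lenabled /lstep pc_k rnd_k; do 2 eexists; split; [exact: exp le|split].
Qed.

Lemma round_done_succ : round_done r.+1.
Proof. by move=> j jF; split; [apply: reaches_next_round | apply: sent_valid_next]. Qed.

End NextRound.

Lemma every_round_done r : round_done r.
Proof. by elim: r => [|r]; [apply: round_done0 | apply: round_done_succ]. Qed.

Lemma eventually_justified r i : 0 < r -> i \notin faulty ->
  exists k v S, {subset S <= aux (state k i)} /\ is_valid t r v S.
Proof.
case: r => // r _ iF.
have [k [v [S justified]]] :=
  eventually_in_values (fun j jF => (every_round_done r jF).2) iF.
by exists k, v, S.
Qed.

End Liveness.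
End Execution.

Theorem lemma4 (n t : nat) (faulty : {set 'I_n}) (prop : 'I_n -> bool)
    (C : nat -> config n) (lab : nat -> label n) :
  3 * t < n -> #|faulty| <= t -> @execution n t faulty prop C lab ->
  forall (r : nat) (i : 'I_n), 0 < r -> i \notin faulty ->
  exists (k : nat) (v : bool) (S : seq (smsg n)),
    {subset S <= aux (loc (C k) i)} /\ @is_valid n t r v S.
Proof.
move=> t_lt_third few_faulty [C0 [Cstep [deliver [timer fair]]]].
exact: (eventually_justified few_faulty t_lt_third C0 Cstep deliver timer fair).
Qed.
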